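(* For every integer $i\ge1$, as $n\to\infty$, in probability, $$\frac{\#\{w\in W_n:\ s_n(w)=i\}}{nk}\to x_i:=(1+\alpha)\Gamma(2+\alpha)\frac{\Gamma(i)}{\Gamma(2+\alpha+i)} ,$$ where $\alpha=k/\lambda$.
   Context: Preferred attachment affiliation model. Fix a real $\lambda>0$, an integer $k\ge 1$ and an integer $l\ge 0$ with $\lambda\le k+l$. At time $0$ a library contains books $w_1,\dots,w_l$, each with score $1$. For $n=0,1,2,\dots$, step $n+1$ proceeds as follows: $k$ new books $w_{l+nk+1},\dots,w_{l+(n+1)k}$ arrive, each with score $1$; then a customer $v_{n+1}$ arrives and, conditionally on the past and independently over books, downloads each book $w\in W_{n+1}=\{w_1,\dots,w_{l+(n+1)k}\}$ with probability $p_{n+1,s(w)}=\lambda s(w)/(l+(n+1)k+n\lambda)$, where $s(w)$ is the current score of $w$. Every book downloaded by $v_{n+1}$ then has its score increased by $1$. $W_n=\{w_1,\dots,w_{l+nk}\}$ and $s_n(w)$ denotes the score of $w$ after step $n$. *)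

From Stdlib Require Import Reals List Arith.
Import ListNotations.
Open Scope R_scope.

(* A finite (sub)probability distribution on states, as a list of
   (state, weight) pairs; duplicates allowed.  A state is the list of
   current scores of the books w_1, w_2, ... (in arrival order). *)
Definition distr := list (list nat * R).

(* One customer visit: each book with score x is downloaded independently
   with probability lam * x / denom (and its score increases by one). *)
Fixpoint visit (lam denom : R) (s : list nat) : distr :=
  match s with
  | nil => [(nil, 1)]
  | x :: t =>
      let p := lam * INR x / denom in
      flat_map (fun '(t', q) => [(S x :: t', p * q); (x :: t', (1 - p) * q)])
               (visit lam denom t)
  end.

(* Law of the score vector after step n (i.e. of (s_n(w))_{w in W_n}). *)
Fixpoint paa_dist (lam : R) (k l : nat) (n : nat) : distr :=
  match n with
  | O => [(repeat 1%nat l, 1)]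
  | S m =>
      (* step m+1: k new books of score 1 arrive, then customer v_{m+1}
         downloads w with prob lam*s(w)/(l+(m+1)k+m*lam) *)
      flat_map (fun '(s, q) =>
                  map (fun '(s', r) => (s', q * r))
                      (visit lam (INR (l + (S m) * k) + INR m * lam)
                             (s ++ repeat 1%nat k)))
               (paa_dist lam k l m)
  end.

Definition paa_prob (lam : R) (k l n : nat) (E : list nat -> bool) : R :=
  fold_right Rplus 0
    (map (fun '(s, q) => if E s then q else 0) (paa_dist lam k l n)).

Definition num_score (s : list nat) (i : nat) : nat :=
  count_occ Nat.eq_dec s i.

(* Gamma(2+a) * Gamma(i) / Gamma(2+a+i) for an integer i >= 1, written via
   Gamma(2+a+i) = Gamma(2+a) * prod_{j=0}^{i-1} (2+a+j) and Gamma(i) = (i-1)!.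
   (Stdlib has no Gamma function.) *)
Fixpoint poch (a : R) (i : nat) : R :=
  match i with
  | O => 1
  | S j => poch a j * (a + INR j)
  end.

Definition gamma_ratio (alpha : R) (i : nat) : R :=
  INR (fact (i - 1)) / poch (2 + alpha) i.

Definition x_lim (alpha : R) (i : nat) : R := (1 + alpha) * gamma_ratio alpha i.

(* Write N_j(n) for the number of books
   of score j after step n.  The proof is a second-moment method:
   1. Given the state after step n, step n+1 moves each book of score j up with
      probability lam j / D_n independently (D_n the normalizer), so the
      conditional mean of N_j(n+1) is linear in N_j(n), N_(j-1)(n) and the
      conditional variance is at most lam j (Ex_visit_sq, visit_mean_count).
   2. Hence the means e_j(n) = E N_j(n) satisfy a linear recursion, and a
      deterministic lemma on recursions u(n+1) = u(n) + A_n - B_n u(n) gives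
      e_j(n) / n -> k x_j by induction on j (mean_count_limit).
   3. The deviations N_j - e_j are mixed by a sub-stochastic, mass preserving
      transition, which does not increase their sum of squares, so the summed
      variances over scores 1..i grow by at most lam i^2 per step: the variance
      of N_i(n) is O(n) (mixing_contraction, var_sum_step, count_var_linear).
   4. Chebyshev's inequality then bounds the probability of an eps-deviation of
      N_i(n) / (n k) from x_i by O(n) / n^2 -> 0.
   Generic facts (finite expectations, one visit, real sequences, sums) come
   first; the model-specific development is the section Process. *)

From Stdlib Require Import Reals List Arith Lra Lia.
Import ListNotations.
Open Scope R_scope.

Definition Ex (d : distr) (f : list nat -> R) : R :=
  fold_right Rplus 0 (map (fun sq => snd sq * f (fst sq)) d).

Definition mass (d : distr) : R := Ex d (fun _ => 1).

Definition nonneg_weights (d : distr) : Prop := forall s q, In (s, q) d -> 0 <= q.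

Lemma Ex_cons s q d f : Ex ((s, q) :: d) f = q * f s + Ex d f.
Proof. reflexivity. Qed.

Lemma Ex_app d1 d2 f : Ex (d1 ++ d2) f = Ex d1 f + Ex d2 f.
Proof.
  induction d1 as [|[s q] d1 IH]; [unfold Ex; simpl; ring|].
  rewrite <- app_comm_cons, !Ex_cons, IH; ring.
Qed.

Lemma Ex_ext d f g : (forall s, f s = g s) -> Ex d f = Ex d g.
Proof.
  intros H; induction d as [|[s q] d IH]; [reflexivity|].
  rewrite !Ex_cons, IH, H; reflexivity.
Qed.

Lemma Ex_plus d f g : Ex d (fun s => f s + g s) = Ex d f + Ex d g.
Proof.
  induction d as [|[s q] d IH]; [unfold Ex; simpl; ring|].
  rewrite !Ex_cons, IH; ring.
Qed.

Lemma Ex_scal d c f : Ex d (fun s => c * f s) = c * Ex d f.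
Proof.
  induction d as [|[s q] d IH]; [unfold Ex; simpl; ring|].
  rewrite !Ex_cons, IH; ring.
Qed.

Lemma Ex_const d c : Ex d (fun _ => c) = c * mass d.
Proof. unfold mass. rewrite <- Ex_scal. apply Ex_ext. intros; ring. Qed.

Lemma Ex_plus_const d c f : mass d = 1 -> Ex d (fun s => c + f s) = c + Ex d f.
Proof. intros Hm. rewrite Ex_plus, Ex_const, Hm. ring. Qed.

Lemma Ex_mono d f g :
  (forall s q, In (s, q) d -> 0 <= q /\ f s <= g s) -> Ex d f <= Ex d g.
Proof.
  induction d as [|[s q] d IH]; intros H; [unfold Ex; simpl; lra|].
  rewrite !Ex_cons. destruct (H s q (or_introl eq_refl)) as [H1 H2].
  assert (Ex d f <= Ex d g) by (apply IH; intros; apply H; right; auto).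
  assert (q * f s <= q * g s) by (apply Rmult_le_compat_l; auto). lra.
Qed.

Lemma Ex_nonneg d f :
  nonneg_weights d -> (forall s, 0 <= f s) -> 0 <= Ex d f.
Proof.
  intros Hd Hf. replace 0 with (Ex d (fun _ => 0)) by (rewrite Ex_const; ring).
  apply Ex_mono. intros s q Hi. split; [exact (Hd s q Hi)|apply Hf].
Qed.

Definition dl_prob (lam D : R) (x : nat) : R := lam * INR x / D.

Lemma dl_prob_nonneg lam D x : 0 < lam -> 0 < D -> 0 <= dl_prob lam D x.
Proof.
  intros Hl HD. unfold dl_prob.
  apply Rmult_le_pos; [apply Rmult_le_pos; [lra|apply pos_INR]|left; apply Rinv_0_lt_compat; lra].
Qed.

Lemma dl_prob_mono lam D x y : 0 < lam -> 0 < D -> (x <= y)%nat ->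
  dl_prob lam D x <= dl_prob lam D y.
Proof.
  intros Hl HD Hxy. unfold dl_prob, Rdiv.
  apply Rmult_le_compat_r; [left; apply Rinv_0_lt_compat; lra|].
  apply Rmult_le_compat_l; [lra|apply le_INR; exact Hxy].
Qed.

Lemma Ex_visit_cons lam D x t f :
  Ex (visit lam D (x :: t)) f =
  Ex (visit lam D t)
     (fun t' => dl_prob lam D x * f (S x :: t') + (1 - dl_prob lam D x) * f (x :: t')).
Proof.
  simpl. generalize (visit lam D t). intro d.
  induction d as [|[s q] d IH]; [reflexivity|].
  simpl flat_map. rewrite !Ex_cons, IH. unfold dl_prob. ring.
Qed.

Lemma mass_visit lam D s : mass (visit lam D s) = 1.
Proof.
  unfold mass. induction s as [|x t IH]; [unfold Ex; simpl; ring|].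
  rewrite Ex_visit_cons. transitivity (Ex (visit lam D t) (fun _ => 1)); [|exact IH].
  apply Ex_ext; intros; ring.
Qed.

Lemma visit_support lam D M s : 0 < lam -> 0 < D -> lam * INR M <= D ->
  (forall x, In x s -> (x <= M)%nat) ->
  forall t q, In (t, q) (visit lam D s) ->
    0 <= q /\ length t = length s /\ (forall y, In y t -> (y <= S M)%nat).
Proof.
  intros Hl HD HM. induction s as [|x s IH]; intros Hs t q Hin.
  - destruct Hin as [E|[]]. inversion E; subst. simpl; repeat split; [lra|intros y []].
  - simpl in Hin. apply in_flat_map in Hin. destruct Hin as [[t' q'] [Hin' Ht]].
    destruct (IH (fun y Hy => Hs y (or_intror Hy)) t' q' Hin') as [Hq [Hlen Hy]].
    assert (Hx : (x <= M)%nat) by (apply Hs; left; reflexivity).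
    pose proof (dl_prob_nonneg lam D x Hl HD) as Hp0.
    assert (Hp1 : dl_prob lam D x <= 1).
    { apply Rle_trans with (dl_prob lam D M); [apply dl_prob_mono; auto|].
      unfold dl_prob. apply (Rmult_le_reg_r D); [lra|].
      unfold Rdiv. rewrite Rmult_assoc, Rinv_l; lra. }
    unfold dl_prob in Hp0, Hp1.
    destruct Ht as [E|[E|[]]]; inversion E; subst; clear E;
      (repeat split; [apply Rmult_le_pos; lra|simpl; lia|]);
      intros y [Ey|Ey]; [lia|apply Hy; auto| lia|apply Hy; auto].
Qed.

Definition count_R (j : nat) (s : list nat) : R := INR (num_score s j).

Definition ind (b : bool) : R := if b then 1 else 0.

Lemma count_R_cons j x t : count_R j (x :: t) = ind (Nat.eqb x j) + count_R j t.
Proof.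
  unfold count_R, num_score; simpl. destruct (Nat.eq_dec x j) as [e|e].
  - subst. rewrite Nat.eqb_refl, S_INR. unfold ind; ring.
  - apply Nat.eqb_neq in e. rewrite e. unfold ind; ring.
Qed.

Fixpoint sumL (g : nat -> R) (s : list nat) : R :=
  match s with nil => 0 | x :: t => g x + sumL g t end.

Definition book_mean (lam D : R) (j x : nat) : R :=
  dl_prob lam D x * ind (Nat.eqb (S x) j) + (1 - dl_prob lam D x) * ind (Nat.eqb x j).

Definition book_var (lam D : R) (j x : nat) : R :=
  dl_prob lam D x * (1 - dl_prob lam D x) * (ind (Nat.eqb (S x) j) - ind (Nat.eqb x j)) ^ 2.

Lemma Ex_visit_count lam D j s :
  Ex (visit lam D s) (count_R j) = sumL (book_mean lam D j) s.
Proof.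
  induction s as [|x t IH]; [unfold Ex, count_R; simpl; ring|].
  rewrite Ex_visit_cons. simpl sumL. rewrite <- IH, <- Ex_plus_const by apply mass_visit.
  apply Ex_ext; intros; rewrite !count_R_cons; unfold book_mean; ring.
Qed.

(* Downloads are independent, so the second moment around any c splits into
   the squared bias plus the sum of the books' Bernoulli variances. *)
Lemma Ex_visit_sq lam D j s : forall c,
  Ex (visit lam D s) (fun t => (count_R j t - c) ^ 2) =
  (Ex (visit lam D s) (count_R j) - c) ^ 2 + sumL (book_var lam D j) s.
Proof.
  induction s as [|x t IH]; intros c; [unfold Ex, count_R; simpl; ring|].
  rewrite !Ex_visit_cons. simpl sumL.
  set (p := dl_prob lam D x). set (z1 := ind (Nat.eqb (S x) j)). set (z0 := ind (Nat.eqb x j)).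
  transitivity (Ex (visit lam D t) (fun t' =>
     p * (count_R j t' - (c - z1)) ^ 2 + (1 - p) * (count_R j t' - (c - z0)) ^ 2)).
  { apply Ex_ext; intros; rewrite !count_R_cons; fold z1 z0; ring. }
  rewrite Ex_plus, !Ex_scal, !IH.
  transitivity (p * ((Ex (visit lam D t) (count_R j) - (c - z1)) ^ 2) +
                (1 - p) * ((Ex (visit lam D t) (count_R j) - (c - z0)) ^ 2) +
                sumL (book_var lam D j) t).
  { ring. }
  replace (Ex (visit lam D t)
            (fun t' => p * count_R j (S x :: t') + (1 - p) * count_R j (x :: t')))
    with ((p * z1 + (1 - p) * z0) + Ex (visit lam D t) (count_R j)).
  - unfold book_var; fold p z1 z0. ring.
  - rewrite <- Ex_plus_const by apply mass_visit.
    apply Ex_ext; intros; rewrite !count_R_cons; fold z1 z0; ring.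
Qed.

(* Mean of the new count of score j+1: books of score j+1 stay unless
   downloaded, books of score j move up when downloaded. *)
Lemma visit_mean_count lam D j s :
  sumL (book_mean lam D (S j)) s =
  (1 - lam * INR (S j) / D) * count_R (S j) s + lam * INR j / D * count_R j s.
Proof.
  induction s as [|x t IH]; [unfold count_R; simpl; ring|].
  simpl sumL. rewrite IH, !count_R_cons. unfold book_mean, dl_prob, ind. simpl Nat.eqb.
  destruct (Nat.eqb_spec x j); destruct (Nat.eqb_spec x (S j)); subst; try lia; ring.
Qed.

Lemma visit_var_count_bound lam D j s : 0 < lam -> 0 < D ->
  sumL (book_var lam D j) s <= INR (length s) * (lam * INR j / D).
Proof.
  intros Hl HD. induction s as [|x t IH]; [simpl; lra|].
  simpl sumL. simpl length. rewrite S_INR.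
  assert (book_var lam D j x <= lam * INR j / D); [|lra].
  pose proof (dl_prob_nonneg lam D x Hl HD). pose proof (dl_prob_nonneg lam D j Hl HD).
  unfold book_var, ind. fold (dl_prob lam D j).
  destruct (Nat.eqb_spec (S x) j); destruct (Nat.eqb_spec x j); subst; try lia.
  - pose proof (dl_prob_mono lam D x (S x) Hl HD (le_S _ _ (le_n x))). nra.
  - nra.
  - nra.
Qed.

Lemma cv_const c : Un_cv (fun _ => c) c.
Proof. intros e He. exists 0%nat. intros. unfold R_dist. rewrite Rminus_diag, Rabs_R0. lra. Qed.

Lemma cv_ext_ev u v l N : (forall n, (n >= N)%nat -> u n = v n) -> Un_cv u l -> Un_cv v l.
Proof.
  intros H Hu e He. destruct (Hu e He) as [M HM]. exists (max N M). intros n Hn.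
  rewrite <- H by lia. apply HM; lia.
Qed.

Lemma cv_eq u l l' : Un_cv u l -> l = l' -> Un_cv u l'.
Proof. intros H E; subst; exact H. Qed.

Lemma cv_squeeze (P b : nat -> R) N : (forall n, (n >= N)%nat -> 0 <= P n <= b n) ->
  Un_cv b 0 -> Un_cv P 0.
Proof.
  intros H Hb e He. destruct (Hb e He) as [M HM]. exists (max N M). intros n Hn.
  specialize (H n ltac:(lia)). specialize (HM n ltac:(lia)). unfold R_dist in *.
  rewrite Rminus_0_r in *. rewrite Rabs_right in *; lra.
Qed.

Lemma cv_inv_lin a b : 0 < a -> 0 < b -> Un_cv (fun n => 1 / (a * INR n + b)) 0.
Proof.
  intros Ha Hb e He. destruct (INR_archimed (a * e) 1) as [N HN]; [nra|].
  exists N. intros n Hn. unfold R_dist. rewrite Rminus_0_r.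
  assert (HN' : INR N <= INR n) by (apply le_INR; lia).
  assert (0 <= INR N) by apply pos_INR.
  assert (Hp : 0 < a * INR n + b) by nra.
  rewrite Rabs_right by (left; apply Rdiv_lt_0_compat; lra).
  apply (Rmult_lt_reg_r (a * INR n + b)); auto.
  unfold Rdiv. rewrite Rmult_1_l, Rinv_l by lra.
  assert (a * e * INR N <= a * e * INR n) by (apply Rmult_le_compat_l; nra). nra.
Qed.

(* (a + b n) / n^2 -> 0: along n+1 it is a r^2 + b r with r = 1/(n+1) -> 0. *)
Lemma cv_affine_over_square a b : Un_cv (fun n => (a + b * INR n) / INR n ^ 2) 0.
Proof.
  pose proof (cv_inv_lin 1 1 Rlt_0_1 Rlt_0_1) as Hr.
  apply CV_shift with (k := 1%nat).
  refine (cv_eq _ _ _ (cv_ext_ev _ _ _ 0%nat _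
            (CV_plus _ _ _ _ (CV_mult _ _ _ _ (cv_const a) (CV_mult _ _ _ _ Hr Hr))
                             (CV_mult _ _ _ _ (cv_const b) Hr))) _).
  - intros n _. rewrite plus_INR. simpl (INR 1). pose proof (pos_INR n). field. lra.
  - ring.
Qed.

Lemma cesaro_abs (v e : nat -> R) N :
  (forall n, (n >= N)%nat -> Rabs (v (S n)) <= Rabs (v n) + Rabs (e n)) ->
  Un_cv e 0 -> Un_cv (fun n => v n / INR n) 0.
Proof.
  intros Hv He d Hd.
  destruct (He (d / 2)) as [M1 HM1]; [lra|].
  set (M := max N M1).
  assert (Hstep : forall j, Rabs (v (M + j)%nat) <= Rabs (v M) + INR j * (d / 2)).
  { induction j.
    - rewrite Nat.add_0_r. simpl. lra.
    - replace (M + S j)%nat with (S (M + j)) by lia.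
      eapply Rle_trans; [apply Hv; unfold M; lia|].
      assert (Rabs (e (M + j)%nat) < d / 2).
      { specialize (HM1 (M + j)%nat ltac:(unfold M; lia)). unfold R_dist in HM1.
        rewrite Rminus_0_r in HM1. exact HM1. }
      rewrite S_INR. lra. }
  destruct (INR_archimed (d / 2) (Rabs (v M))) as [N2 HN2]; [lra|].
  exists (max (S M) N2). intros n Hn. unfold R_dist. rewrite Rminus_0_r.
  assert (Hn0 : 0 < INR n) by (apply lt_0_INR; lia).
  assert (HnN2 : INR N2 <= INR n) by (apply le_INR; lia).
  specialize (Hstep (n - M)%nat). replace (M + (n - M))%nat with n in Hstep by lia.
  assert (INR (n - M) <= INR n) by (apply le_INR; lia).
  unfold Rdiv. rewrite Rabs_mult, (Rabs_right (/ INR n)) by (left; apply Rinv_0_lt_compat; auto).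
  apply (Rmult_lt_reg_r (INR n)); auto. rewrite Rmult_assoc, Rinv_l by lra.
  assert (0 <= Rabs (v M)) by apply Rabs_pos. nra.
Qed.

Lemma linear_recursion_limit (u A B : nat -> R) Ainf Binf N :
  (forall n, (n >= N)%nat -> u (S n) = u n + A n - B n * u n) ->
  (forall n, (n >= N)%nat -> 0 <= B n <= 1) ->
  Un_cv A Ainf -> Un_cv (fun n => INR n * B n) Binf -> 0 <= Binf ->
  Un_cv (fun n => u n / INR n) (Ainf / (1 + Binf)).
Proof.
  intros Hrec HB HA HnB HBi.
  set (c := Ainf / (1 + Binf)).
  set (v := fun n => u n - c * INR n).
  set (e := fun n => A n - c - c * (INR n * B n)).
  assert (He : Un_cv e 0).
  { replace 0 with (Ainf - c - c * Binf) by (unfold c; field; lra).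
    apply CV_minus; [apply CV_minus; [exact HA|apply cv_const]|].
    apply CV_mult; [apply cv_const|exact HnB]. }
  assert (Hv : Un_cv (fun n => v n / INR n) 0).
  { apply (cesaro_abs v e N); [|exact He].
    intros n Hn. specialize (Hrec n Hn). specialize (HB n Hn).
    assert (E : v (S n) = (1 - B n) * v n + e n) by (unfold v, e; rewrite Hrec, S_INR; ring).
    rewrite E. eapply Rle_trans; [apply Rabs_triang|].
    rewrite Rabs_mult, (Rabs_right (1 - B n)) by lra.
    assert (0 <= Rabs (v n)) by apply Rabs_pos. nra. }
  assert (Hc := CV_plus _ _ _ _ Hv (cv_const c)). rewrite Rplus_0_l in Hc.
  refine (cv_ext_ev _ _ _ 1%nat _ Hc).
  intros n Hn. unfold v. field. apply not_0_INR; lia.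
Qed.

Fixpoint sum1 (f : nat -> R) (i : nat) : R :=
  match i with O => 0 | S j => sum1 f j + f (S j) end.

Lemma sum1_nonneg f i : (forall j, 0 <= f j) -> 0 <= sum1 f i.
Proof. intros H; induction i; simpl; [lra|]. specialize (H (S i)). lra. Qed.

Lemma sum1_le f g i : (forall j, (1 <= j <= i)%nat -> f j <= g j) -> sum1 f i <= sum1 g i.
Proof.
  induction i; intros H; simpl; [lra|].
  assert (sum1 f i <= sum1 g i) by (apply IHi; intros; apply H; lia).
  assert (f (S i) <= g (S i)) by (apply H; lia). lra.
Qed.

Lemma sum1_plus f g i : sum1 (fun j => f j + g j) i = sum1 f i + sum1 g i.
Proof. induction i; simpl; [ring|]. rewrite IHi; ring. Qed.

Lemma sum1_const c i : sum1 (fun _ => c) i = INR i * c.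
Proof. induction i; simpl sum1; [simpl; ring|]. rewrite IHi, S_INR; ring. Qed.

Lemma sum1_ge_last f i : (forall j, 0 <= f j) -> f (S i) <= sum1 f (S i).
Proof. intros H. simpl. pose proof (sum1_nonneg f i H). lra. Qed.

Lemma Ex_sum1 d f i : Ex d (fun s => sum1 (fun j => f j s) i) = sum1 (fun j => Ex d (f j)) i.
Proof.
  induction i; simpl.
  - rewrite Ex_const; ring.
  - rewrite Ex_plus, IHi. reflexivity.
Qed.

Lemma scaled_ratio_le L D c : 0 < D -> 0 <= L -> L <= D -> 0 <= c -> L * (c / D) <= c.
Proof.
  intros HD HL HLD Hc. apply (Rmult_le_reg_r D); [lra|].
  unfold Rdiv. replace (L * (c * / D) * D) with (L * c * (/ D * D)) by ring.
  rewrite Rinv_l; [|lra]. nra.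
Qed.

Lemma sq_subconvex a b x y : 0 <= a -> 0 <= b -> a + b <= 1 ->
  (a * x + b * y) ^ 2 <= a * x ^ 2 + b * y ^ 2.
Proof.
  intros. assert (0 <= a * b * (x - y) ^ 2) by (apply Rmult_le_pos; [apply Rmult_le_pos; lra|apply pow2_ge_0]).
  assert (0 <= a * x ^ 2) by (apply Rmult_le_pos; [lra|apply pow2_ge_0]).
  assert (0 <= b * y ^ 2) by (apply Rmult_le_pos; [lra|apply pow2_ge_0]).
  assert (0 <= (1 - (a + b)) * (a * x ^ 2 + b * y ^ 2)) by (apply Rmult_le_pos; lra).
  replace ((a * x + b * y) ^ 2) with ((a + b) * (a * x ^ 2 + b * y ^ 2) - a * b * (x - y) ^ 2) by ring.
  nra.
Qed.

(* Strengthened form for induction: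
   the last coordinate only keeps the part a_(i+1) that stays. *)
Lemma mixing_contraction_last (a b X : nat -> R) i :
  (forall j, (1 <= j <= S i)%nat -> 0 <= a j /\ 0 <= b j /\ a j + b j <= 1) ->
  (forall j, (1 <= j < S i)%nat -> a j + b (S j) = 1) -> b 1%nat = 0 ->
  sum1 (fun j => (a j * X j + b j * X (j - 1)%nat) ^ 2) (S i) <=
  sum1 (fun j => X j ^ 2) i + a (S i) * X (S i) ^ 2.
Proof.
  intros Hab Hcons Hb1. induction i as [|i IH].
  - simpl. rewrite Hb1. destruct (Hab 1%nat) as [Ha [_ Ha1]]; [lia|]. rewrite Hb1 in Ha1.
    assert (0 <= a 1%nat * (1 - a 1%nat) * X 1%nat ^ 2)
      by (apply Rmult_le_pos; [apply Rmult_le_pos; lra|apply pow2_ge_0]).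
    simpl in *. nra.
  - change (sum1 (fun j => (a j * X j + b j * X (j - 1)%nat) ^ 2) (S (S i))) with
      (sum1 (fun j => (a j * X j + b j * X (j - 1)%nat) ^ 2) (S i) +
       (a (S (S i)) * X (S (S i)) + b (S (S i)) * X (S (S i) - 1)%nat) ^ 2).
    replace (S (S i) - 1)%nat with (S i) by lia.
    assert (IHi : sum1 (fun j => (a j * X j + b j * X (j - 1)%nat) ^ 2) (S i) <=
                  sum1 (fun j => X j ^ 2) i + a (S i) * X (S i) ^ 2)
      by (apply IH; intros; [apply Hab|apply Hcons]; lia).
    destruct (Hab (S (S i))) as [Ha [Hb Hab1]]; [lia|].
    pose proof (sq_subconvex _ _ (X (S (S i))) (X (S i)) Ha Hb Hab1).
    pose proof (Hcons (S i) ltac:(lia)) as Hc.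
    change (sum1 (fun j => X j ^ 2) (S i)) with (sum1 (fun j => X j ^ 2) i + X (S i) ^ 2).
    assert (a (S i) * X (S i) ^ 2 + b (S (S i)) * X (S i) ^ 2 = X (S i) ^ 2)
      by (rewrite <- Rmult_plus_distr_r, Hc; ring).
    lra.
Qed.

Lemma mixing_contraction (a b X : nat -> R) i :
  (forall j, (1 <= j <= i)%nat -> 0 <= a j /\ 0 <= b j /\ a j + b j <= 1) ->
  (forall j, (1 <= j < i)%nat -> a j + b (S j) = 1) -> b 1%nat = 0 ->
  sum1 (fun j => (a j * X j + b j * X (j - 1)%nat) ^ 2) i <= sum1 (fun j => X j ^ 2) i.
Proof.
  intros Hab Hcons Hb1. destruct i as [|i]; [simpl; lra|].
  eapply Rle_trans; [apply mixing_contraction_last; auto|].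
  destruct (Hab (S i)) as [Ha [Hb Hab1]]; [lia|].
  change (sum1 (fun j => X j ^ 2) (S i)) with (sum1 (fun j => X j ^ 2) i + X (S i) ^ 2).
  assert (0 <= (1 - a (S i)) * X (S i) ^ 2) by (apply Rmult_le_pos; [lra|apply pow2_ge_0]).
  lra.
Qed.

Lemma tail_indicator_bound eps T y e x : 0 < eps -> 0 < T ->
  Rabs (e / T - x) < eps / 2 -> eps < Rabs (y / T - x) ->
  1 <= 4 / (eps ^ 2 * T ^ 2) * (y - e) ^ 2.
Proof.
  intros He HT Hb Hy.
  set (z := (y - e) / T).
  assert (Ez : z = (y / T - x) - (e / T - x)) by (unfold z; field; lra).
  assert (Hz : eps / 2 < Rabs z).
  { pose proof (Rabs_triang_inv (y / T - x) (e / T - x)). rewrite Ez. lra. }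
  assert (Hz2 : (eps / 2) ^ 2 < z ^ 2) by (rewrite <- (pow2_abs z); nra).
  replace ((y - e) ^ 2) with (z ^ 2 * T ^ 2) by (unfold z; field; lra).
  apply (Rmult_le_reg_r (eps ^ 2)); [nra|].
  replace (4 / (eps ^ 2 * T ^ 2) * (z ^ 2 * T ^ 2) * eps ^ 2) with (4 * z ^ 2) by (field; lra).
  nra.
Qed.

Lemma chebyshev_scaled (d : distr) (f : list nat -> R) c x T eps :
  nonneg_weights d -> 0 < eps -> 0 < T -> Rabs (c / T - x) < eps / 2 ->
  Ex d (fun s => if Rlt_dec eps (Rabs (f s / T - x)) then 1 else 0) <=
  4 / (eps ^ 2 * T ^ 2) * Ex d (fun s => (f s - c) ^ 2).
Proof.
  intros Hd He HT Hc. rewrite <- Ex_scal. apply Ex_mono. intros s q Hin.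
  split; [exact (Hd s q Hin)|].
  destruct (Rlt_dec eps (Rabs (f s / T - x))) as [Hy|Hy].
  - exact (tail_indicator_bound eps T (f s) c x He HT Hc Hy).
  - apply Rmult_le_pos; [|apply pow2_ge_0].
    apply Rmult_le_pos; [lra|left; apply Rinv_0_lt_compat; apply Rmult_lt_0_compat; apply pow_lt; lra].
Qed.

Section Process.

Variables (lam : R) (k l : nat).
Hypothesis lam_pos : 0 < lam.
Hypothesis k_pos : (1 <= k)%nat.
Hypothesis lam_le : lam <= INR (k + l).

(* Normalizer of the download probabilities at step n+1. *)
Definition denom (n : nat) : R := INR (l + S n * k) + INR n * lam.

Lemma denom_form n : denom n = (INR k + lam) * INR n + (INR l + INR k).
Proof. unfold denom. rewrite plus_INR, mult_INR, S_INR. ring. Qed.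

Lemma INR_k_ge_1 : 1 <= INR k.
Proof. change 1 with (INR 1). apply le_INR. exact k_pos. Qed.

Lemma denom_pos n : 0 < denom n.
Proof.
  rewrite denom_form. pose proof INR_k_ge_1. pose proof (pos_INR n). pose proof (pos_INR l).
  nra.
Qed.

Lemma Ex_paa_step n f :
  Ex (paa_dist lam k l (S n)) f =
  Ex (paa_dist lam k l n) (fun s => Ex (visit lam (denom n) (s ++ repeat 1%nat k)) f).
Proof.
  simpl paa_dist. change (INR (l + (k + n * k)) + INR n * lam) with (denom n).
  generalize (paa_dist lam k l n). intro d.
  induction d as [|[s q] d IH]; [reflexivity|].
  simpl flat_map. rewrite Ex_app, IH, Ex_cons. f_equal.
  generalize (visit lam (denom n) (s ++ repeat 1%nat k)). intro e.
  induction e as [|[t r] e IHe]; [unfold Ex; simpl; ring|].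
  simpl map. rewrite !Ex_cons, IHe. ring.
Qed.

Lemma mass_paa n : mass (paa_dist lam k l n) = 1.
Proof.
  induction n as [|m IH]; [unfold mass, Ex; simpl; ring|].
  unfold mass in *. rewrite Ex_paa_step.
  transitivity (Ex (paa_dist lam k l m) (fun _ => 1)); [|exact IH].
  apply Ex_ext; intros; apply mass_visit.
Qed.

(* After step n there are l + n k books, all scores are at most n+1, and the
   weights are nonnegative (the hypothesis lam <= k + l keeps every download
   probability at most 1). *)
Lemma paa_support n : forall s q, In (s, q) (paa_dist lam k l n) ->
  0 <= q /\ length s = (l + n * k)%nat /\ (forall y, In y s -> (y <= S n)%nat).
Proof.
  induction n as [|m IH]; intros s q Hin.
  - destruct Hin as [E|[]]. inversion E; subst.
    repeat split; [lra|rewrite repeat_length; lia|].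
    intros y Hy. apply repeat_spec in Hy. lia.
  - simpl in Hin. apply in_flat_map in Hin. destruct Hin as [[s0 q0] [Hin0 Hin]].
    apply in_map_iff in Hin. destruct Hin as [[t r] [E Ht]]. inversion E; subst; clear E.
    destruct (IH s0 q0 Hin0) as [Hq [Hlen Hy]].
    assert (HM : lam * INR (S m) <= denom m).
    { rewrite denom_form, S_INR. rewrite plus_INR in lam_le.
      pose proof INR_k_ge_1. pose proof (pos_INR m). nra. }
    destruct (visit_support lam (denom m) (S m) (s0 ++ repeat 1%nat k)
                lam_pos (denom_pos m) HM) with (t := s) (q := r) as [Hr [Hl2 Hy2]]; auto.
    + intros x Hx. apply in_app_or in Hx. destruct Hx as [Hx|Hx]; [apply Hy; auto|].
      apply repeat_spec in Hx; lia.
    + repeat split; [apply Rmult_le_pos; auto| |exact Hy2].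
      rewrite Hl2, length_app, repeat_length, Hlen. lia.
Qed.

Lemma paa_nonneg_weights n : nonneg_weights (paa_dist lam k l n).
Proof. intros s q Hin. apply (paa_support n s q Hin). Qed.

Definition new_books (j : nat) : R := if Nat.eqb j 1 then INR k else 0.

Lemma count_R_new_books j s : count_R j (s ++ repeat 1%nat k) = count_R j s + new_books j.
Proof.
  unfold count_R, num_score, new_books. rewrite count_occ_app, plus_INR. f_equal.
  destruct (Nat.eqb_spec j 1).
  - subst. rewrite count_occ_repeat_eq; auto.
  - rewrite count_occ_repeat_neq; auto.
Qed.

Definition mean_count (j n : nat) : R := Ex (paa_dist lam k l n) (count_R j).

Definition stay (j n : nat) : R := 1 - lam * INR j / denom n.
Definition move (j n : nat) : R := lam * INR (j - 1) / denom n.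

Lemma cond_mean_count n j s :
  Ex (visit lam (denom n) (s ++ repeat 1%nat k)) (count_R (S j)) =
  stay (S j) n * (count_R (S j) s + new_books (S j)) + move (S j) n * (count_R j s + new_books j).
Proof.
  rewrite Ex_visit_count, visit_mean_count, !count_R_new_books. unfold stay, move.
  replace (S j - 1)%nat with j by lia. reflexivity.
Qed.

Lemma mean_count_rec n j :
  mean_count (S j) (S n) =
  stay (S j) n * (mean_count (S j) n + new_books (S j)) +
  move (S j) n * (mean_count j n + new_books j).
Proof.
  unfold mean_count. rewrite Ex_paa_step, (Ex_ext _ _ _ (cond_mean_count n j)).
  set (A := stay (S j) n). set (B := move (S j) n).
  transitivity (Ex (paa_dist lam k l n) (fun s =>
     (A * new_books (S j) + B * new_books j) + (A * count_R (S j) s + B * count_R j s))).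
  { apply Ex_ext; intros; ring. }
  rewrite Ex_plus_const by apply mass_paa. rewrite Ex_plus, !Ex_scal. ring.
Qed.

Lemma cv_inv_denom : Un_cv (fun n => 1 / denom n) 0.
Proof.
  pose proof INR_k_ge_1. pose proof (pos_INR l).
  refine (cv_ext_ev _ _ _ 0%nat _ (cv_inv_lin (INR k + lam) (INR l + INR k) ltac:(lra) ltac:(lra))).
  intros n _. rewrite denom_form. reflexivity.
Qed.

Lemma cv_n_over_denom : Un_cv (fun n => INR n / denom n) (1 / (INR k + lam)).
Proof.
  pose proof INR_k_ge_1.
  assert (Hc := CV_minus _ _ _ _ (cv_const (1 / (INR k + lam)))
                 (CV_mult _ _ _ _ (cv_const ((INR l + INR k) / (INR k + lam))) cv_inv_denom)).
  rewrite Rmult_0_r, Rminus_0_r in Hc.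
  refine (cv_ext_ev _ _ _ 0%nat _ Hc).
  intros n _. pose proof (denom_pos n). rewrite denom_form in *. field. lra.
Qed.

Lemma rate_eventually_le_1 j :
  exists N0, forall n, (n >= N0)%nat -> lam * INR j <= denom n.
Proof.
  pose proof INR_k_ge_1.
  destruct (INR_archimed 1 (lam * INR j)) as [N0 HN0]; [lra|].
  exists N0. intros n Hn. assert (INR N0 <= INR n) by (apply le_INR; lia).
  rewrite denom_form. pose proof (pos_INR l).
  assert (0 <= (INR k + lam - 1) * INR n) by (apply Rmult_le_pos; [lra|apply pos_INR]).
  lra.
Qed.

Lemma rate_bounds j n : lam * INR j <= denom n -> 0 <= lam * INR j / denom n <= 1.
Proof.
  intros H. pose proof (denom_pos n). split.
  - apply (dl_prob_nonneg lam (denom n) j lam_pos (denom_pos n)).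
  - apply (Rmult_le_reg_r (denom n)); auto. unfold Rdiv. rewrite Rmult_assoc, Rinv_l; lra.
Qed.

Lemma cv_n_rate j : Un_cv (fun n => INR n * (lam * INR j / denom n)) (lam * INR j / (INR k + lam)).
Proof.
  pose proof INR_k_ge_1.
  refine (cv_eq _ _ _ (cv_ext_ev _ _ _ 0%nat _ (CV_mult _ _ _ _ (cv_const (lam * INR j)) cv_n_over_denom)) _).
  - intros n _. unfold Rdiv. ring.
  - field. lra.
Qed.

Lemma mean_count_limit_step j Ainf :
  Un_cv (fun n => stay (S j) n * new_books (S j) + move (S j) n * (mean_count j n + new_books j)) Ainf ->
  Un_cv (fun n => mean_count (S j) n / INR n) (Ainf / (1 + lam * INR (S j) / (INR k + lam))).
Proof.
  intros HA. destruct (rate_eventually_le_1 (S j)) as [N0 HN0].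
  refine (linear_recursion_limit _ _ (fun n => lam * INR (S j) / denom n) _ _ N0 _ _ HA _ _).
  - intros n _. rewrite mean_count_rec. unfold stay. ring.
  - intros n Hn. apply rate_bounds, HN0, Hn.
  - apply cv_n_rate.
  - pose proof INR_k_ge_1. pose proof (lt_0_INR (S j) (Nat.lt_0_succ j)).
    left. apply Rdiv_lt_0_compat; [apply Rmult_lt_0_compat|]; lra.
Qed.

Lemma poch_pos a n : 0 < a -> 0 < poch a n.
Proof.
  intros Ha. induction n; simpl; [lra|].
  apply Rmult_lt_0_compat; auto. pose proof (pos_INR n). lra.
Qed.

Lemma x_lim_rec al m : 0 < al ->
  x_lim al (S (S m)) = x_lim al (S m) * INR (S m) / (2 + al + INR (S m)).
Proof.
  intros Ha. unfold x_lim, gamma_ratio.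
  replace (S (S m) - 1)%nat with (S m) by lia. replace (S m - 1)%nat with m by lia.
  change (poch (2 + al) (S (S m))) with (poch (2 + al) (S m) * (2 + al + INR (S m))).
  change (fact (S m)) with (S m * fact m)%nat. rewrite mult_INR.
  pose proof (poch_pos (2 + al) (S m) ltac:(lra)).
  pose proof (pos_INR (S m)). field. lra.
Qed.

Lemma mean_count_limit m :
  Un_cv (fun n => mean_count (S m) n / INR n) (INR k * x_lim (INR k / lam) (S m)).
Proof.
  pose proof INR_k_ge_1.
  induction m as [|m IH].
  - refine (cv_eq _ _ _ (mean_count_limit_step 0 (INR k) _) _).
    + assert (H0 := CV_minus _ _ _ _ (cv_const (INR k))
                      (CV_mult _ _ _ _ (cv_const (lam * INR k)) cv_inv_denom)).
      rewrite Rmult_0_r, Rminus_0_r in H0.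
      refine (cv_ext_ev _ _ _ 0%nat _ H0).
      intros n _. unfold stay, move, new_books. simpl. pose proof (denom_pos n). field. lra.
    + unfold x_lim, gamma_ratio. simpl. field. lra.
  - set (L := INR k * x_lim (INR k / lam) (S m)) in *.
    set (Ainf := lam * INR (S m) * (L * (1 / (INR k + lam)) + new_books (S m) * 0)).
    refine (cv_eq _ _ _ (mean_count_limit_step (S m) Ainf _) _).
    + refine (cv_ext_ev _ _ _ 1%nat _
               (CV_mult _ _ _ _ (cv_const (lam * INR (S m)))
                  (CV_plus _ _ _ _ (CV_mult _ _ _ _ IH cv_n_over_denom)
                                   (CV_mult _ _ _ _ (cv_const (new_books (S m))) cv_inv_denom)))).
      intros n Hn. unfold stay, move. replace (S (S m) - 1)%nat with (S m) by lia.
      replace (new_books (S (S m))) with 0 by reflexivity. pose proof (denom_pos n).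
      assert (INR n <> 0) by (apply not_0_INR; lia). field. split; lra.
    + unfold Ainf, L. rewrite x_lim_rec by (apply Rdiv_lt_0_compat; lra).
      rewrite (S_INR (S m)). pose proof (pos_INR (S m)).
      field. repeat split; try lra. nra.
Qed.

Lemma mean_fraction_limit i : (1 <= i)%nat ->
  Un_cv (fun n => mean_count i n / INR (n * k)) (x_lim (INR k / lam) i).
Proof.
  intros Hi. destruct i as [|m]; [lia|]. pose proof INR_k_ge_1.
  refine (cv_eq _ _ _ (cv_ext_ev _ _ _ 1%nat _ (CV_mult _ _ _ _ (mean_count_limit m) (cv_const (/ INR k)))) _).
  - intros n Hn. rewrite mult_INR. assert (INR n <> 0) by (apply not_0_INR; lia). field. lra.
  - field. lra.
Qed.

Definition dev_sq_sum (i n : nat) (s : list nat) : R :=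
  sum1 (fun j => (count_R j s - mean_count j n) ^ 2) i.

Definition var_sum (i n : nat) : R := Ex (paa_dist lam k l n) (dev_sq_sum i n).

Definition count_var (i n : nat) : R :=
  Ex (paa_dist lam k l n) (fun s => (count_R i s - mean_count i n) ^ 2).

Lemma cond_dev_bound n j i s : (S j <= i)%nat -> length s = (l + n * k)%nat ->
  Ex (visit lam (denom n) (s ++ repeat 1%nat k))
     (fun t => (count_R (S j) t - mean_count (S j) (S n)) ^ 2) <=
  (stay (S j) n * (count_R (S j) s - mean_count (S j) n) +
   move (S j) n * (count_R j s - mean_count j n)) ^ 2 + lam * INR i.
Proof.
  intros Hji Hlen. pose proof (denom_pos n) as HD.
  rewrite Ex_visit_sq, cond_mean_count, mean_count_rec. apply Rplus_le_compat; [right; ring|].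
  eapply Rle_trans; [apply visit_var_count_bound; auto|].
  assert (HL : INR (length (s ++ repeat 1%nat k)) <= denom n).
  { rewrite length_app, repeat_length, Hlen. unfold denom.
    replace (l + n * k + k)%nat with (l + S n * k)%nat by lia.
    assert (0 <= INR n * lam) by (apply Rmult_le_pos; [apply pos_INR|lra]). lra. }
  apply Rle_trans with (lam * INR (S j)).
  - apply scaled_ratio_le; auto; [apply pos_INR|apply Rmult_le_pos; [lra|apply pos_INR]].
  - apply Rmult_le_compat_l; [lra|apply le_INR; exact Hji].
Qed.

Lemma stay_move_bounds n i : lam * INR i <= denom n ->
  forall j, (1 <= j <= i)%nat -> 0 <= stay j n /\ 0 <= move j n /\ stay j n + move j n <= 1.
Proof.
  intros Hi j Hj. pose proof (denom_pos n) as HD.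
  assert (Hrate : 0 <= lam * INR j / denom n <= 1).
  { apply rate_bounds. eapply Rle_trans; [|exact Hi].
    apply Rmult_le_compat_l; [lra|apply le_INR; lia]. }
  pose proof (dl_prob_nonneg lam (denom n) (j - 1) lam_pos HD).
  pose proof (dl_prob_mono lam (denom n) (j - 1) j lam_pos HD ltac:(lia)).
  unfold stay, move. unfold dl_prob in *. lra.
Qed.

Lemma var_sum_step n i : lam * INR i <= denom n ->
  var_sum i (S n) <= var_sum i n + lam * INR i * INR i.
Proof.
  intros Hi. pose proof (denom_pos n) as HD.
  unfold var_sum. rewrite Ex_paa_step.
  replace (Ex (paa_dist lam k l n) (dev_sq_sum i n) + lam * INR i * INR i) with
    (Ex (paa_dist lam k l n) (fun s => lam * INR i * INR i + dev_sq_sum i n s))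
    by (rewrite Ex_plus_const by apply mass_paa; ring).
  apply Ex_mono. intros s q Hin.
  destruct (paa_support n s q Hin) as [Hq [Hlen _]]. split; [exact Hq|].
  set (X := fun j => count_R j s - mean_count j n).
  unfold dev_sq_sum at 1. rewrite Ex_sum1.
  apply Rle_trans with
    (sum1 (fun j => (stay j n * X j + move j n * X (j - 1)%nat) ^ 2 + lam * INR i) i).
  { apply sum1_le. intros j Hj. destruct j as [|j]; [lia|].
    replace (S j - 1)%nat with j by lia. apply cond_dev_bound; [lia|exact Hlen]. }
  rewrite sum1_plus, sum1_const, Rplus_comm. apply Rplus_le_compat; [right; ring|].
  apply mixing_contraction.
  - apply stay_move_bounds, Hi.
  - intros j _. unfold stay, move. replace (S j - 1)%nat with j by lia. field. lra.
  - unfold move. simpl. unfold Rdiv. ring.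
Qed.

Lemma var_sum_linear i :
  exists N1, forall n, (n >= N1)%nat -> var_sum i n <= var_sum i N1 + lam * INR i * INR i * INR n.
Proof.
  destruct (rate_eventually_le_1 i) as [N1 HN1]. exists N1.
  assert (HC : 0 <= lam * INR i * INR i)
    by (pose proof (pos_INR i); apply Rmult_le_pos; [apply Rmult_le_pos|]; lra).
  assert (Hd : forall d, var_sum i (N1 + d) <= var_sum i N1 + lam * INR i * INR i * INR d).
  { induction d.
    - rewrite Nat.add_0_r. simpl. lra.
    - replace (N1 + S d)%nat with (S (N1 + d)) by lia.
      eapply Rle_trans; [apply var_sum_step, HN1; lia|]. rewrite S_INR. lra. }
  intros n Hn. specialize (Hd (n - N1)%nat). replace (N1 + (n - N1))%nat with n in Hd by lia.
  eapply Rle_trans; [exact Hd|]. apply Rplus_le_compat_l, Rmult_le_compat_l; [exact HC|].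
  apply le_INR; lia.
Qed.

Lemma count_var_linear i : (1 <= i)%nat ->
  exists N1 K C, forall n, (n >= N1)%nat -> count_var i n <= K + C * INR n.
Proof.
  intros Hi. destruct (var_sum_linear i) as [N1 HN1].
  exists N1, (var_sum i N1), (lam * INR i * INR i). intros n Hn.
  eapply Rle_trans; [|apply HN1, Hn]. apply Ex_mono. intros s q Hin.
  split; [exact (paa_nonneg_weights n s q Hin)|].
  destruct i as [|m]; [lia|]. unfold dev_sq_sum.
  apply (sum1_ge_last (fun j => (count_R j s - mean_count j n) ^ 2)). intros; apply pow2_ge_0.
Qed.

Lemma paa_prob_Ex n E :
  paa_prob lam k l n E = Ex (paa_dist lam k l n) (fun s => ind (E s)).
Proof.
  unfold paa_prob. generalize (paa_dist lam k l n). intro d.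
  induction d as [|[s q] d IH]; [reflexivity|].
  rewrite Ex_cons. simpl. rewrite IH. unfold ind. destruct (E s); ring.
Qed.

Lemma paa_tail_bound n i x eps : 0 < eps -> (1 <= n)%nat ->
  Rabs (mean_count i n / INR (n * k) - x) < eps / 2 ->
  0 <= paa_prob lam k l n
         (fun s => if Rlt_dec eps (Rabs (INR (num_score s i) / INR (n * k) - x))
                   then true else false)
    <= 4 / (eps ^ 2 * INR (n * k) ^ 2) * count_var i n.
Proof.
  intros He Hn Hclose. rewrite paa_prob_Ex.
  assert (HT : 0 < INR (n * k)) by (apply lt_0_INR; lia).
  rewrite (Ex_ext _ _ (fun s => if Rlt_dec eps (Rabs (count_R i s / INR (n * k) - x)) then 1 else 0))
    by (intros s; unfold ind, count_R; destruct (Rlt_dec _ _); reflexivity).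
  split.
  - apply Ex_nonneg; [apply paa_nonneg_weights|]. intros s. destruct (Rlt_dec _ _); lra.
  - apply chebyshev_scaled; auto. apply paa_nonneg_weights.
Qed.

End Process.

Theorem mainTheorem3 :
  forall (lam : R) (k l : nat),
    0 < lam -> (1 <= k)%nat -> lam <= INR (k + l) ->
    forall i : nat, (1 <= i)%nat ->
    forall eps : R, 0 < eps ->
      Un_cv
        (fun n => paa_prob lam k l n
           (fun s => if Rlt_dec eps
                          (Rabs (INR (num_score s i) / INR (n * k)
                                 - x_lim (INR k / lam) i))
                     then true else false))
        0.
Proof.
  intros lam k l Hl Hk Hkl i Hi eps He.
  destruct (count_var_linear lam k l Hl Hk Hkl i Hi) as [N1 [K [C HK]]].
  destruct (mean_fraction_limit lam k l Hl Hk i Hi (eps / 2)) as [N2 HN2]; [lra|].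
  set (F := 4 / (eps ^ 2 * INR k ^ 2)).
  apply (cv_squeeze _ (fun n => F * ((K + C * INR n) / INR n ^ 2)) (max (max N1 N2) 1)).
  - intros n Hn.
    assert (Hclose := HN2 n ltac:(lia)). unfold R_dist in Hclose.
    destruct (paa_tail_bound lam k l Hl Hk Hkl n i _ eps He ltac:(lia) Hclose) as [H0 H1].
    split; [exact H0|]. eapply Rle_trans; [exact H1|].
    assert (0 < INR n) by (apply lt_0_INR; lia).
    assert (1 <= INR k) by (apply (INR_k_ge_1 k Hk)).
    replace (F * ((K + C * INR n) / INR n ^ 2))
      with (4 / (eps ^ 2 * INR (n * k) ^ 2) * (K + C * INR n))
      by (unfold F; rewrite mult_INR; field; lra).
    apply Rmult_le_compat_l; [|apply HK; lia].
    apply Rmult_le_pos; [lra|left; apply Rinv_0_lt_compat].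
    apply Rmult_lt_0_compat; apply pow_lt; [lra|apply lt_0_INR; nia].
  - replace 0 with (F * 0) by ring. apply CV_mult; [apply cv_const|apply cv_affine_over_square].
Qed.
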